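(* Let $(X,d)$ be a finite ultrametric space. Then for every $\varepsilon>0$ there exists $(Y,\rho)\in\mathfrak U$ such that $|X|=|Y|$ and $d_{GH}(\operatorname{is}(X),\operatorname{is}(Y))<\varepsilon$.
   Context: $\operatorname{Sp}(X)=\{d(x,y):x\neq y\}$; $\mathfrak U$ is the class of finite ultrametric spaces $X$ with $|\operatorname{Sp}(X)|=|X|-1$. $\operatorname{is}(X)$ denotes the isometry type of $X$. For bounded metric spaces $X,Y$ and $\varepsilon>0$, $d_{GH}(\operatorname{is}(X),\operatorname{is}(Y))<\varepsilon$ iff there is a metric space $(Z,d_Z)$ with subspaces $X',Y'$ isometric to $X,Y$ such that each point of $X'$ lies at $d_Z$-distance $<\varepsilon$ from some point of $Y'$ and each point of $Y'$ lies at distance $<\varepsilon$ from some point of $X'$. *)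

From HB Require Import structures.
From mathcomp Require Import all_boot all_order all_algebra.
From mathcomp Require Import reals.
Set Implicit Arguments. Unset Strict Implicit. Unset Printing Implicit Defensive.
Import Order.TTheory GRing.Theory Num.Theory.
Local Open Scope ring_scope.

Definition is_metric (R : realType) (T : Type) (d : T -> T -> R) : Prop :=
  [/\ forall x y, 0 <= d x y,
      forall x y, d x y = 0 <-> x = y,
      forall x y, d x y = d y x &
      forall x y z, d x z <= d x y + d y z].

Definition is_ultrametric (R : realType) (T : Type) (d : T -> T -> R) : Prop :=
  is_metric d /\ forall x y z, d x z <= Num.max (d x y) (d y z).

Definition spectrum (R : realType) (T : finType) (d : T -> T -> R) : seq R :=
  undup [seq d p.1 p.2 | p <- enum [pred p : T * T | p.1 != p.2]].

(* (T,d) belongs to the class U: finite ultrametric with |Sp(X)| = |X| - 1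
   (stated as |Sp(X)| + 1 = |X|, so that the empty space is not in U). *)
Definition in_classU (R : realType) (T : finType) (d : T -> T -> R) : Prop :=
  is_ultrametric d /\ (size (spectrum d)).+1 = #|T|.

(* d_GH(is(X), is(Y)) < eps, via the characterization in the paper:
   a metric space Z with isometric copies X' = f(X), Y' = g(Y) that are
   mutually eps-close. *)
Definition dGH_lt (R : realType) (TX TY : Type)
  (dX : TX -> TX -> R) (dY : TY -> TY -> R) (eps : R) : Prop :=
  exists (Z : Type) (dZ : Z -> Z -> R) (f : TX -> Z) (g : TY -> Z),
    [/\ is_metric dZ,
        forall a b, dZ (f a) (f b) = dX a b,
        forall a b, dZ (g a) (g b) = dY a b,
        forall a, exists b, dZ (f a) (g b) < eps &
        forall b, exists a, dZ (f a) (g b) < eps].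

From HB Require Import structures.
From mathcomp Require Import all_boot all_order all_algebra.
From mathcomp Require Import reals.
From mathcomp Require Import zify lra.
Import Order.TTheory GRing.Theory Num.Theory.
Local Open Scope ring_scope.

(* Enumerate X as x_0, ..., x_(n-1).  For x != y let r = d(x, y); the open
   r-balls around x and y are disjoint, and sep_rank x y is the larger of the
   least ranks of their points.  This number lies in {1, ..., n-1}, it takes
   every such value, and it determines d(x, y).  Adding delta * sep_rank x y
   to d(x, y), for delta so small that the order between different distances
   is preserved, keeps the ultrametric inequality (the maximal rank behaves
   like an ultrametric on each level set of d) and separates the distances
   into exactly n - 1 values.  The perturbed space is within delta * n of X,
   as witnessed by gluing two copies of X at distance d + delta * n. *)

Lemma finite_values_gap (R : realDomainType) (T : finType) (f : T -> R) :
  exists2 G : R, 0 < G & forall s t, f s < f t -> f s + G <= f t.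
Proof.
exists (\big[Order.min/1]_(p : T * T | f p.1 < f p.2) (f p.2 - f p.1)).
  apply: (big_ind (fun x : R => 0 < x)) => //.
    by move=> x y hx hy; rewrite lt_min hx hy.
  by move=> p hp; rewrite subr_gt0.
move=> s t hst; rewrite -lerBrDl (bigD1 (s, t)) //=.
by rewrite ge_min lexx.
Qed.

Lemma exists_small_step (R : realFieldType) (m : R) (n : nat) :
  0 < m -> exists2 delta : R, 0 < delta & delta * n%:R < m.
Proof.
move=> m_gt0; have n1_gt0 : 0 < n%:R + 1 :> R by rewrite ltr_wpDl.
exists (m / (n%:R + 1)); first by rewrite divr_gt0.
by rewrite mulrAC ltr_pdivrMr // ltr_pM2l // ltrDl.
Qed.

Lemma size_undup_map_kernel (T U V : eqType) (f : T -> U) (g : T -> V)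
    (s : seq T) :
  {in s &, forall p q, (f p == f q) = (g p == g q)} ->
  size (undup (map f s)) = size (undup (map g s)).
Proof.
elim: s => [|a s IH] //= fg.
have fg' : {in s &, forall p q, (f p == f q) = (g p == g q)}.
  by move=> p q hp hq; apply: fg; rewrite inE ?hp ?hq orbT.
have -> : (f a \in map f s) = (g a \in map g s).
  apply/mapP/mapP => -[q hq e]; exists q => //; apply/eqP.
    by rewrite -fg ?inE ?eqxx ?hq ?orbT // e.
  by rewrite fg ?inE ?eqxx ?hq ?orbT // e.
by case: (_ \in _) => /=; rewrite IH.
Qed.

Lemma is_ultrametric_intro (R : realType) (T : Type) (d : T -> T -> R) :
  (forall x y, 0 <= d x y) -> (forall x y, d x y = 0 <-> x = y) ->
  (forall x y, d x y = d y x) ->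
  (forall x y z, d x z <= Num.max (d x y) (d y z)) -> is_ultrametric d.
Proof.
move=> d_ge0 d_eq0 d_sym d_ult; split=> //; split=> // x y z.
apply: le_trans (d_ult x y z) _; rewrite ge_max.
by have := d_ge0 x y; have := d_ge0 y z; move=> *; apply/andP; split; lra.
Qed.

Section SeparationRank.
Variables (R : realType) (X : finType) (d : X -> X -> R).
Hypothesis d_ultrametric : is_ultrametric d.

Lemma d_ge0 x y : 0 <= d x y. Proof. by case: d_ultrametric => -[]. Qed.
Lemma d_eq0 x y : d x y = 0 <-> x = y. Proof. by case: d_ultrametric => -[]. Qed.
Lemma d_sym x y : d x y = d y x. Proof. by case: d_ultrametric => -[]. Qed.
Lemma d_ult x y z : d x z <= Num.max (d x y) (d y z).
Proof. by case: d_ultrametric. Qed.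
Lemma d_xx x : d x x = 0. Proof. exact/d_eq0. Qed.

Lemma d_gt0 {x y} : x != y -> 0 < d x y.
Proof.
by move=> xy; rewrite lt_def d_ge0 andbT; apply: contra xy => /eqP/d_eq0->.
Qed.

Lemma ball_trans {x y z r} : d x y < r -> d y z < r -> d x z < r.
Proof.
by move=> xy yz; apply: le_lt_trans (d_ult x y z) _; rewrite gt_max xy.
Qed.

Lemma ult_isosceles {x y z} : d x y < d y z -> d x z = d y z.
Proof.
move=> xy_lt; apply/eqP; rewrite eq_le; apply/andP; split.
  by apply: le_trans (d_ult x y z) _; rewrite ge_max (ltW xy_lt) lexx.
rewrite leNgt; apply/negP => xz_lt.
have := @ball_trans y x z (d y z).
by rewrite d_sym xy_lt xz_lt ltxx => /(_ isT isT).
Qed.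

Definition rank (x : X) : nat := enum_rank x.

Lemma rank_inj : injective rank.
Proof. by move=> x y /val_inj/enum_rank_inj. Qed.

Lemma rank_lt_card x : (rank x < #|X|)%N.
Proof. exact: ltn_ord. Qed.

Definition ball_rep (x : X) (r : R) : X :=
  [arg min_(z < x | d x z < r) rank z].

Lemma ball_rep_in x {r} : 0 < r -> d x (ball_rep x r) < r.
Proof. by move=> r_gt0; rewrite /ball_rep; case: arg_minnP; rewrite ?d_xx. Qed.

Lemma ball_rep_min {x r z} : d x z < r -> (rank (ball_rep x r) <= rank z)%N.
Proof.
move=> xz; rewrite /ball_rep; case: arg_minnP => [|i _ /(_ z xz)//].
by rewrite d_xx (le_lt_trans (d_ge0 x z)).
Qed.

Lemma ball_rep_eq {x y r} : d x y < r -> ball_rep x r = ball_rep y r.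
Proof.
move=> xy; have r_gt0 : 0 < r by apply: le_lt_trans xy; apply: d_ge0.
apply: rank_inj; apply/eqP; rewrite eqn_leq !ball_rep_min //.
  by rewrite d_sym in xy; apply: ball_trans xy _; apply: ball_rep_in.
by apply: ball_trans xy _; apply: ball_rep_in.
Qed.

Lemma ball_rep_neq x y : x != y -> ball_rep x (d x y) != ball_rep y (d x y).
Proof.
move=> xy; apply/eqP => rep_eq.
have r_gt0 := d_gt0 xy.
have := @ball_trans x _ y _ (ball_rep_in x r_gt0).
by rewrite rep_eq (d_sym (ball_rep _ _)) ball_rep_in // ltxx => /(_ isT).
Qed.

Definition sep_rank (x y : X) : nat :=
  maxn (rank (ball_rep x (d x y))) (rank (ball_rep y (d x y))).

Lemma sep_rankC x y : sep_rank x y = sep_rank y x.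
Proof. by rewrite /sep_rank d_sym maxnC. Qed.

Lemma sep_rank_bounds {x y} : x != y -> (0 < sep_rank x y < #|X|)%N.
Proof.
move/ball_rep_neq; rewrite -(inj_eq rank_inj) /sep_rank.
by rewrite gtn_max !rank_lt_card andbT; lia.
Qed.

(* The point u of rank sep_rank x y recovers d x y as its distance to the set
   of points of smaller rank. *)
Lemma sep_rank_spec {x y} : x != y -> exists u, [/\ rank u = sep_rank x y,
   exists2 w, (rank w < sep_rank x y)%N & d u w = d x y &
   forall w, (rank w < sep_rank x y)%N -> d x y <= d u w].
Proof.
wlog le_yx : x y / (rank (ball_rep y (d x y)) <= rank (ball_rep x (d x y)))%N.
  move=> W xy.
  case: (leqP (rank (ball_rep y (d x y))) (rank (ball_rep x (d x y)))).
    by move=> le_yx; apply: W.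
  move/ltnW.
  rewrite (d_sym x y) => le_xy.
  by rewrite sep_rankC; apply: W; rewrite // eq_sym.
move=> xy; have r_gt0 := d_gt0 xy; set r := d x y in r_gt0 le_yx *.
have -> : sep_rank x y = rank (ball_rep x r).
  by rewrite /sep_rank (maxn_idPl le_yx).
set u := ball_rep x r; set w := ball_rep y r.
have xu : d x u < r by apply: ball_rep_in.
have yw : d y w < r by apply: ball_rep_in.
have uy : d u y = r by rewrite (@ult_isosceles u x y) // d_sym.
have uw : d u w = r.
  by rewrite d_sym (@ult_isosceles w y u) (d_sym y u) uy // d_sym.
exists u; split=> //.
  exists w => //.
  by rewrite ltn_neqAle le_yx andbT (inj_eq rank_inj) eq_sym ball_rep_neq.
move=> z uz_lt; rewrite leNgt; apply/negP => uz.
by have := ball_rep_min (ball_trans xu uz); rewrite leqNgt uz_lt.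
Qed.

Lemma sep_rank_dist {x y x' y'} : x != y -> x' != y' ->
  sep_rank x y = sep_rank x' y' -> d x y = d x' y'.
Proof.
move=> xy xy' same.
have [u [u_rank [w w_lt w_d] u_min]] := sep_rank_spec xy.
have [u' [u'_rank [w' w'_lt w'_d] u'_min]] := sep_rank_spec xy'.
have u_u' : u = u' by apply: rank_inj; rewrite u_rank u'_rank.
rewrite -{}u_u' in w'_d u'_min.
apply/eqP; rewrite eq_le; apply/andP; split.
  by rewrite -w'_d u_min // same.
by rewrite -w_d u'_min // -same.
Qed.

Lemma sep_rank_surj k : (0 < k < #|X|)%N -> exists2 p : X * X,
  p.1 != p.2 & sep_rank p.1 p.2 = k.
Proof.
case/andP=> k_gt0 k_lt.
have n_gt0 : (0 < #|X|)%N by apply: leq_trans k_lt.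
pose x := enum_val (Ordinal k_lt); pose x0 := enum_val (Ordinal n_gt0).
have x_rank : rank x = k by rewrite /rank enum_valK.
have x0_lt : (rank x0 < k)%N by rewrite /rank enum_valK.
case: (@arg_minP _ _ _ x0 (fun w => rank w < k)%N (d x) x0_lt) => y y_lt y_min.
have xy : x != y by apply: contraTneq y_lt => <-; rewrite x_rank ltnn.
exists (x, y) => //=.
have rep_x : rank (ball_rep x (d x y)) = k.
  apply/eqP; rewrite eqn_leq -{1}x_rank ball_rep_min ?d_xx ?d_gt0 //=.
  rewrite leqNgt; apply/negP => /y_min.
  by rewrite leNgt ball_rep_in ?d_gt0.
have rep_y : (rank (ball_rep y (d x y)) < k)%N.
  by apply: leq_ltn_trans y_lt; rewrite ball_rep_min ?d_xx ?d_gt0.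
by rewrite /sep_rank rep_x (maxn_idPl (ltnW rep_y)).
Qed.

Lemma sep_rank_isosceles {x y z} :
  d x y < d y z -> sep_rank x z = sep_rank y z.
Proof.
by move=> xy_lt; rewrite /sep_rank (ult_isosceles xy_lt) (ball_rep_eq xy_lt).
Qed.

Lemma sep_rank_equilateral {x y z} : d x y = d x z -> d y z = d x z ->
  (sep_rank x z <= maxn (sep_rank x y) (sep_rank y z))%N.
Proof. by move=> xy yz; rewrite /sep_rank xy yz; lia. Qed.

Section Perturbation.
Variable delta : R.
Hypothesis delta_gt0 : 0 < delta.
Hypothesis dist_gap : forall a b a' b', d a b < d a' b' ->
  d a b + delta * #|X|%:R <= d a' b'.

Definition pdist (x y : X) : R :=
  if x == y then 0 else d x y + delta * (sep_rank x y)%:R.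

Lemma pdistE {x y} : x != y -> pdist x y = d x y + delta * (sep_rank x y)%:R.
Proof. by rewrite /pdist => /negPf ->. Qed.

Lemma pdist_xx x : pdist x x = 0.
Proof. by rewrite /pdist eqxx. Qed.

Lemma dist_le_pdist x y : d x y <= pdist x y.
Proof.
have [->|xy] := eqVneq x y; first by rewrite pdist_xx d_xx.
by rewrite pdistE // lerDl mulr_ge0 // ltW.
Qed.

Lemma pdist_ge0 x y : 0 <= pdist x y.
Proof. exact: le_trans (d_ge0 x y) (dist_le_pdist x y). Qed.

Lemma pdist_lt {x y} : x != y -> pdist x y < d x y + delta * #|X|%:R.
Proof.
move=> xy; rewrite pdistE // ltrD2l ltr_pM2l // ltr_nat.
by case/andP: (sep_rank_bounds xy).
Qed.

Lemma pdist_le x y : pdist x y <= d x y + delta * #|X|%:R.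
Proof.
have [->|xy] := eqVneq x y; last exact/ltW/pdist_lt.
by rewrite pdist_xx d_xx add0r mulr_ge0 // ltW.
Qed.

Lemma pdistC x y : pdist x y = pdist y x.
Proof.
have [->//|xy] := eqVneq x y.
have yx : y != x by rewrite eq_sym.
by rewrite (pdistE xy) (pdistE yx) d_sym sep_rankC.
Qed.

Lemma pdist_eq0 x y : pdist x y = 0 <-> x = y.
Proof.
split=> [|->]; last exact: pdist_xx.
have [//|xy] := eqVneq x y; move=> xy0.
by have := lt_le_trans (d_gt0 xy) (dist_le_pdist x y); rewrite xy0 ltxx.
Qed.

Lemma pdist_lt_of_dist_lt {x y x' y'} :
  d x y < d x' y' -> pdist x y < pdist x' y'.
Proof.
move=> lt_d; apply: lt_le_trans (dist_le_pdist x' y').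
have [eq_xy|xy] := eqVneq x y.
  by rewrite eq_xy pdist_xx -(d_xx y) -{1}eq_xy.
exact: lt_le_trans (pdist_lt xy) (dist_gap _ _ _ _ lt_d).
Qed.

Lemma pdist_isosceles {x y z} : d x y < d y z -> pdist x z = pdist y z.
Proof.
move=> xy_lt.
have yz : y != z by apply: contraTneq xy_lt => ->; rewrite d_xx ltNge d_ge0.
have xz : x != z by apply: contraTneq xy_lt => ->; rewrite d_sym ltxx.
rewrite (pdistE xz) (pdistE yz).
by rewrite (ult_isosceles xy_lt) (sep_rank_isosceles xy_lt).
Qed.

Lemma pdist_ult x y z : pdist x z <= Num.max (pdist x y) (pdist y z).
Proof.
have [->|xz] := eqVneq x z; first by rewrite pdist_xx le_max pdist_ge0.
have [<-|xy] := eqVneq x y; first by rewrite pdist_xx le_max lexx orbT.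
have [->|yz] := eqVneq y z; first by rewrite pdist_xx le_max lexx.
case: (ltgtP (d x y) (d y z)) => [xy_lt|yz_lt|xy_yz].
- by rewrite (pdist_isosceles xy_lt) le_max lexx orbT.
- have zy_lt : d z y < d y x by rewrite d_sym (d_sym y x).
  by rewrite pdistC (pdist_isosceles zy_lt) pdistC le_max lexx.
have [xz_lt|xz_ge] := ltP (d x z) (d x y).
  by rewrite le_max (ltW (pdist_lt_of_dist_lt xz_lt)).
have xz_eq : d x y = d x z.
  apply/eqP; rewrite eq_le xz_ge /=.
  by apply: le_trans (d_ult x y z) _; rewrite -xy_yz maxxx.
have [K_le|K_le] := leqP (sep_rank x y) (sep_rank y z);
  have := sep_rank_equilateral xz_eq (etrans (esym xy_yz) xz_eq).
- move/maxn_idPr: K_le => -> K_xz; rewrite le_max; apply/orP; right.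
  rewrite (pdistE xz) (pdistE yz) -xy_yz -xz_eq lerD2l.
  by rewrite ler_wpM2l ?ler_nat // ltW.
- move/ltnW/maxn_idPl: K_le => -> K_xz; rewrite le_max; apply/orP; left.
  rewrite (pdistE xz) (pdistE xy) -xz_eq lerD2l.
  by rewrite ler_wpM2l ?ler_nat // ltW.
Qed.

Lemma pdist_eqE x y x' y' : x != y -> x' != y' ->
  (pdist x y == pdist x' y') = (sep_rank x y == sep_rank x' y').
Proof.
move=> xy xy'; apply/eqP/eqP => [same|same]; last first.
  by rewrite (pdistE xy) (pdistE xy') same (sep_rank_dist xy xy' same).
have same_d : d x y = d x' y'.
  case: (ltgtP (d x y) (d x' y')) => // /pdist_lt_of_dist_lt;
    by rewrite same ltxx.
move: same; rewrite (pdistE xy) (pdistE xy') same_d => /addrI /mulfI.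
by rewrite gt_eqF // => /(_ isT) /eqP; rewrite eqr_nat => /eqP.
Qed.

Lemma pdist_classU : (0 < #|X|)%N -> in_classU pdist.
Proof.
move=> n_gt0; split.
  exact: is_ultrametric_intro pdist_ge0 pdist_eq0 pdistC pdist_ult.
rewrite /spectrum; set E := enum _.
have memE p : (p \in E) = (p.1 != p.2) by rewrite mem_enum.
rewrite (@size_undup_map_kernel _ _ _ _ (fun p => sep_rank p.1 p.2)); last first.
  by move=> p q; rewrite !memE; apply: pdist_eqE.
have ranks : perm_eq (undup [seq sep_rank p.1 p.2 | p <- E]) (iota 1 #|X|.-1).
  apply: uniq_perm; [exact: undup_uniq | exact: iota_uniq |] => k.
  rewrite mem_undup mem_iota add1n (prednK n_gt0).
  apply/mapP/idP => [[p]|/sep_rank_surj [p]].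
    by rewrite memE => xy ->; apply: sep_rank_bounds.
  by exists p; rewrite ?memE.
by rewrite (perm_size ranks) size_iota (prednK n_gt0).
Qed.

End Perturbation.
End SeparationRank.

Definition glue_dist {R : realType} {T : Type} (d rho : T -> T -> R) (c : R)
    (u v : T + T) : R :=
  match u, v with
  | inl a, inl b => d a b
  | inr a, inr b => rho a b
  | inl a, inr b => d a b + c
  | inr a, inl b => d b a + c
  end.

Lemma glue_metric (R : realType) (T : Type) (d rho : T -> T -> R) (c : R) :
  is_metric d -> is_metric rho -> 0 < c ->
  (forall a b, d a b <= rho a b) -> (forall a b, rho a b <= d a b + c) ->
  is_metric (glue_dist d rho c).
Proof.
move=> [d0 de ds dt] [r0 re rs rt] c0 dr rd; split.
- by case=> a; case=> b /=; rewrite ?d0 ?r0 // addr_ge0 // ltW.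
- case=> [a|a] [b|b] /=.
  + by split=> [/de->|[/de]].
  + by split=> // abc; exfalso; have := d0 a b; lra.
  + by split=> // abc; exfalso; have := d0 b a; lra.
  + by split=> [/re->|[/re]].
- by case=> a; case=> b /=; rewrite 1?ds 1?rs.
- case=> a; case=> b; case=> e /=;
  have := dt a b e; have := dt e b a; have := ds a b; have := ds a e;
  have := ds b e; have := dr a b; have := dr b e; have := dr a e;
  have := rd a b; have := rd b e; have := rd a e; have := rs a b;
  have := rs b e; have := rs a e; have := rt a b e;
  have := d0 a b; have := d0 b e; have := d0 a e; lra.
Qed.

Lemma dGH_lt_of_le_add (R : realType) (T : Type) (d rho : T -> T -> R)
    (c eps : R) :
  is_metric d -> is_metric rho -> 0 < c -> c < eps ->
  (forall a b, d a b <= rho a b) -> (forall a b, rho a b <= d a b + c) ->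
  dGH_lt d rho eps.
Proof.
move=> d_metric rho_metric c_gt0 c_lt d_le rho_le.
have d_xx a : d a a = 0 by case: d_metric => _ /(_ a a) [_ ->].
exists (T + T)%type, (glue_dist d rho c), inl, inr; split => //.
- exact: glue_metric.
- by move=> a; exists a; rewrite /= d_xx add0r.
- by move=> b; exists b; rewrite /= d_xx add0r.
Qed.

Theorem mainTheorem16 (R : realType) (X : finType) (d : X -> X -> R) :
  is_ultrametric d -> (0 < #|X|)%N ->
  forall eps : R, 0 < eps ->
  exists (Y : finType) (rho : Y -> Y -> R),
    [/\ in_classU rho, #|X| = #|Y| & dGH_lt d rho eps].
Proof.
move=> d_ultra n_gt0 eps eps_gt0.
have [G G_gt0 gap] := @finite_values_gap R _ (fun p : X * X => d p.1 p.2).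
have [delta delta_gt0 small] : exists2 delta : R,
    0 < delta & delta * #|X|%:R < Num.min G eps.
  by apply: exists_small_step; rewrite lt_min G_gt0.
have dist_gap a b a' b' :
    d a b < d a' b' -> d a b + delta * #|X|%:R <= d a' b'.
  move=> /(gap (a, b) (a', b')) /=.
  by move: small; rewrite lt_min => /andP[? _]; lra.
have pdist_class := @pdist_classU _ _ _ d_ultra _ delta_gt0 dist_gap n_gt0.
exists X, (@pdist R X d delta); split => //.
apply: (@dGH_lt_of_le_add _ _ _ _ (delta * #|X|%:R)).
- by case: d_ultra.
- by case: pdist_class => -[].
- by rewrite mulr_gt0 ?ltr0n.
- by move: small; rewrite lt_min => /andP[].
- exact: dist_le_pdist.
- exact: pdist_le.
Qed.
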